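(* Let $q\in\mathbb{C}^*$ with $|q|>1$. Define the entire functions $\widetilde{E}_0(x)=1$ and, for $m\geq1$, $\widetilde{E}_m(x)=f_1(x)\exp\left(\sum_{k=1}^m\frac{x^k}{k(q^k-1)}\right)$, where $f_1(x)=\sum_{n\geq0}\frac{x^n}{(q;q)_n}$. Then there exist constants $C_1,C_2>0$ such that for all integers $m\geq0$ and all $x\in\mathbb{C}$ with $|x|\leq1$, $$|1-\widetilde{E}_m(x)|\leq C_1(C_2|x|)^{m+1}.$$
   Context: $(q;q)_0=1$ and $(q;q)_n=\prod_{k=1}^n(1-q^k)$ for $n\geq1$. *)

From Stdlib Require Import Reals ClassicalEpsilon Factorial.
From Coquelicot Require Import Coquelicot.
Open Scope C_scope.

(* Sum of a complex series: the (unique) l with [is_series a l] when the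
   series converges (chosen by classical choice; arbitrary otherwise). *)
Definition Csum (a : nat -> C) : C :=
  epsilon (inhabits (RtoC 0)) (fun l : C => is_series a l).

Fixpoint qpoch (q : C) (n : nat) : C :=
  match n with
  | O => RtoC 1
  | S n' => qpoch q n' * (RtoC 1 - q ^ (S n'))
  end.

Definition Cexp (z : C) : C := Csum (fun n => z ^ n / RtoC (INR (fact n))).

Definition f1 (q x : C) : C := Csum (fun n => x ^ n / qpoch q n).

Definition Etilde (q : C) (m : nat) (x : C) : C :=
  match m with
  | O => RtoC 1
  | S _ =>
      f1 q x *
      Cexp (sum_n_m (fun k : nat => x ^ k / (RtoC (INR k) * (q ^ k - RtoC 1))) 1 m)
  end.

From Stdlib Require Import Reals ClassicalEpsilon Lra Lia Factorial.
From Coquelicot Require Import Coquelicot.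
Open Scope C_scope.

(* Since [|(q;q)_n| >= n! (|q| - 1)^n], [f1] is entire, and [f1 x = (1 - x/q) f1 (x/q)].
   Let [qlog x = sum_(k >= 1) x^k / (k (q^k - 1))]; termwise,
   [qlog x - qlog (x/q) = sum_(k >= 1) (x/q)^k / k = -log (1 - x/q)].  Hence
   [g = f1 * exp qlog] satisfies [g x = g (x/q)], and since [|g y - 1| = O(|y|)],
   iterating gives [g = 1] on the unit disc.  Therefore, for [m >= 1],
   [Etilde_m = exp (-(qlog - sum_(k <= m) x^k / (k (q^k - 1))))], and this tail is
   [O(|x|^(m+1))] because the coefficients of [qlog] are [O(|q|^-k)]. *)

Lemma Cinv_R0 : / RtoC 0 = 0.
Proof. unfold Cinv; simpl. unfold Rdiv. rewrite !Rmult_0_l, Ropp_0, Rmult_0_l. reflexivity. Qed.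

Lemma Cmod_sub_sym (z w : C) : Cmod (z - w) = Cmod (w - z).
Proof. rewrite <- Cmod_opp. f_equal. ring. Qed.

Lemma Cmod_sub_ge (z w : C) : (Cmod z - Cmod w <= Cmod (z - w))%R.
Proof.
  pose proof (Cmod_triangle (z - w) w) as H. replace (z - w + w) with z in H by ring. lra.
Qed.

Lemma Cmod_1_sub_ge (z : C) : (1 - Cmod z <= Cmod (1 - z))%R.
Proof. rewrite <- Cmod_1 at 1. apply Cmod_sub_ge. Qed.

Lemma one_sub_neq0_of_Cmod_lt1 (z : C) : (Cmod z < 1)%R -> 1 - z <> 0.
Proof. intros Hz H. pose proof (Cmod_1_sub_ge z) as Hge. rewrite H, Cmod_0 in Hge. lra. Qed.

Lemma Ceq_of_Cmod_sub_le0 (z w : C) : (Cmod (z - w) <= 0)%R -> z = w.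
Proof.
  intros H. assert (H0 : z - w = 0) by (apply Cmod_eq_0; pose proof (Cmod_ge_0 (z - w)); lra).
  replace z with (z - w + w) by ring. rewrite H0. ring.
Qed.

Lemma Cmod_RtoC_nonneg (h : R) : (0 <= h)%R -> Cmod (RtoC h) = h.
Proof. intros Hh. rewrite Cmod_R. exact (Rabs_pos_eq h Hh). Qed.

Lemma Cmod_scale_le (t : R) (y : C) : (0 <= t <= 1)%R -> (Cmod (t * y) <= Cmod y)%R.
Proof.
  intros Ht. rewrite Cmod_mult, Cmod_RtoC_nonneg by lra.
  pose proof (Cmod_ge_0 y). nra.
Qed.

Lemma Cmod_mult_le (x y : C) (a b : R) :
  (Cmod x <= a)%R -> (Cmod y <= b)%R -> (Cmod (x * y) <= a * b)%R.
Proof. intros. rewrite Cmod_mult. apply Rmult_le_compat; auto using Cmod_ge_0. Qed.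

Lemma RtoC_INR_S_neq0 (n : nat) : RtoC (INR (S n)) <> 0.
Proof. intros H. apply RtoC_inj in H. exact (not_0_INR (S n) (Nat.neq_succ_0 n) H). Qed.

Lemma RtoC_fact_neq0 (n : nat) : RtoC (INR (fact n)) <> 0.
Proof. intros H. apply RtoC_inj in H. exact (INR_fact_neq_0 n H). Qed.

Lemma pow_le_1 (x : R) (n : nat) : (0 <= x <= 1)%R -> (x ^ n <= 1)%R.
Proof. intros Hx. rewrite <- (pow1 n). now apply pow_incr. Qed.

Lemma Rle_0_of_le_lim0 (x : R) (u : nat -> R) :
  (forall n, x <= u n)%R -> is_lim_seq u 0%R -> (x <= 0)%R.
Proof. intros H Hu. exact (is_lim_seq_le (fun _ => x) u x 0%R H (is_lim_seq_const x) Hu). Qed.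

Lemma is_lim_seq_div_succ (M : R) : is_lim_seq (fun n => M / INR (S n))%R 0%R.
Proof.
  replace (Finite 0) with (Rbar_mult M (Rbar_inv p_infty)) by (simpl; f_equal; ring).
  apply is_lim_seq_scal_l, is_lim_seq_inv; [|discriminate].
  exact (proj1 (is_lim_seq_incr_1 INR p_infty) is_lim_seq_INR).
Qed.

Lemma is_lim_seq_scal_geom (c rho : R) :
  (Rabs rho < 1)%R -> is_lim_seq (fun n => c * rho ^ n)%R 0%R.
Proof.
  intros Hrho. replace (Finite 0) with (Rbar_mult c 0) by (simpl; f_equal; ring).
  exact (is_lim_seq_scal_l _ c _ (is_lim_seq_geom rho Hrho)).
Qed.

(** * Complex series *)

Lemma is_series_C_unique (a : nat -> C) (l l' : C) :
  is_series a l -> is_series a l' -> l = l'.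
Proof. intros H H'. exact (filterlim_locally_unique _ _ _ H H'). Qed.

Lemma Csum_correct (a : nat -> C) (l : C) : is_series a l -> Csum a = l.
Proof.
  intros Ha. apply (is_series_C_unique a); [|exact Ha].
  unfold Csum. apply epsilon_spec. now exists l.
Qed.

Lemma is_series_C_ext (a b : nat -> C) (l l' : C) :
  (forall n, a n = b n) -> l = l' -> is_series a l -> is_series b l'.
Proof. intros Hab <-. exact (is_series_ext a b l Hab). Qed.

Lemma is_series_R_ext (a b : nat -> R) (l l' : R) :
  (forall n, a n = b n) -> l = l' -> is_series a l -> is_series b l'.
Proof. intros Hab <-. exact (is_series_ext a b l Hab). Qed.

Lemma is_series_Cminus (a b : nat -> C) (la lb : C) :
  is_series a la -> is_series b lb -> is_series (fun n => a n - b n) (la - lb).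
Proof. exact (is_series_minus a b la lb). Qed.

Lemma is_series_Cscal (c : C) (a : nat -> C) (l : C) :
  is_series a l -> is_series (fun n => c * a n) (c * l).
Proof. exact (is_series_scal c a l). Qed.

Lemma is_series_C_shift (a : nat -> C) (l : C) :
  is_series a l -> is_series (fun n => a (S n)) (l - a O).
Proof.
  intros Ha. apply is_series_incr_1. change (is_series a (l - a O + a O)).
  now replace (l - a O + a O) with l by ring.
Qed.

Lemma is_series_C0 : is_series (fun _ : nat => RtoC 0) (RtoC 0).
Proof.
  apply (filterlim_ext (fun _ => zero)).
  - intros n. symmetry. exact (sum_n_m_const_zero 0 n).
  - apply filterlim_const.
Qed.

Lemma is_series_Cmod_le (a : nat -> C) (b : nat -> R) (la : C) (lb : R) :
  (forall n, Cmod (a n) <= b n)%R -> is_series a la -> is_series b lb -> (Cmod la <= lb)%R.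
Proof.
  intros Hab Ha Hb.
  assert (Hn : is_lim_seq (fun n => Cmod (sum_n a n)) (Cmod la)).
  { unfold is_lim_seq. change (Cmod la) with (@norm C_AbsRing C_NormedModule la).
    eapply filterlim_comp; [exact Ha|exact (@filterlim_norm C_AbsRing C_NormedModule la)]. }
  refine (is_lim_seq_le _ _ _ _ _ Hn (Hb : is_lim_seq (sum_n b) lb)). intros n.
  eapply Rle_trans; [exact (@norm_sum_n_m C_AbsRing C_NormedModule a 0 n)|].
  apply sum_n_m_le. exact Hab.
Qed.

Lemma Csum_Cmod_le (a : nat -> C) (b : nat -> R) (lb : R) :
  (forall n, Cmod (a n) <= b n)%R -> is_series b lb ->
  is_series a (Csum a) /\ (Cmod (Csum a) <= lb)%R.
Proof.
  intros Hab Hb.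
  assert (Ha : is_series a (Csum a)).
  { unfold Csum. apply epsilon_spec.
    apply (@ex_series_le C_AbsRing C_CompleteNormedModule a b); [|now exists lb].
    exact Hab. }
  split; [exact Ha|]. exact (is_series_Cmod_le a b _ _ Hab Ha Hb).
Qed.

Lemma is_series_Cmod_sub_head_le (a : nat -> C) (b : nat -> R) (la : C) (lb : R) :
  (forall n, Cmod (a (S n)) <= b n)%R -> is_series a la -> is_series b lb ->
  (Cmod (la - a O) <= lb)%R.
Proof.
  intros Hab Ha. exact (is_series_Cmod_le _ _ _ _ Hab (is_series_C_shift a la Ha)).
Qed.

Lemma is_series_Cmod_tail_le (a : nat -> C) (la : C) (c rho : R) (m : nat) :
  (0 <= rho < 1)%R -> (forall n, Cmod (a n) <= c * rho ^ n)%R -> is_series a la ->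
  (Cmod (la - sum_n a m) <= c * rho ^ S m / (1 - rho))%R.
Proof.
  intros Hrho Hab Ha.
  apply (is_series_Cmod_le (fun k => a (S m + k)%nat) (fun k => c * rho ^ S m * rho ^ k)%R).
  - intros k. rewrite Rmult_assoc, <- pow_add. apply Hab.
  - apply (is_series_incr_n a (S m)); [lia|]. simpl pred.
    change (is_series a (la - sum_n a m + sum_n a m)).
    now replace (la - sum_n a m + sum_n a m) with la by ring.
  - unfold Rdiv. apply (is_series_scal (c * rho ^ S m)%R (fun k => rho ^ k)%R).
    apply is_series_geom. rewrite Rabs_pos_eq; lra.
Qed.

Lemma is_series_Cgeom (z : C) : (Cmod z < 1)%R -> is_series (fun n => z ^ n) (/ (1 - z)).
Proof.
  intros Hz.
  destruct (Csum_Cmod_le (fun n => z ^ n) (fun n => Cmod z ^ n)%R (/ (1 - Cmod z))%R)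
    as [HG _].
  - intros n. rewrite Cmod_pow. lra.
  - apply is_series_geom. rewrite Rabs_pos_eq; auto using Cmod_ge_0.
  - set (G := Csum (fun n => z ^ n)) in HG.
    assert (Hshift : G - 1 = z * G).
    { apply (is_series_C_unique (fun n => z ^ S n)).
      - exact (is_series_C_shift _ _ HG).
      - exact (is_series_Cscal z _ _ HG). }
    pose proof (one_sub_neq0_of_Cmod_lt1 z Hz) as H1z.
    replace (/ (1 - z)) with G; [exact HG|].
    replace G with ((G - z * G) / (1 - z)) at 1 by (field; exact H1z).
    rewrite <- Hshift. field. exact H1z.
Qed.

Lemma is_series_exp (x : R) : is_series (fun n => x ^ n / INR (fact n))%R (exp x).
Proof.
  apply (is_series_R_ext (fun n => / INR (fact n) * x ^ n)%R _ (exp x));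
    [intros n; unfold Rdiv; ring|reflexivity|].
  apply is_pseries_R, is_exp_Reals.
Qed.

Lemma is_series_succ_mul_pow (p : R) :
  (0 <= p < 1)%R -> is_series (fun n => INR (S n) * p ^ n)%R (/ (1 - p) ^ 2)%R.
Proof.
  intros Hp.
  assert (Hg : is_series (fun n => p ^ n)%R (/ (1 - p))%R)
    by (apply is_series_geom; rewrite Rabs_pos_eq; lra).
  assert (Hpos : forall n, (0 <= p ^ n)%R) by (intros n; apply pow_le; lra).
  apply (is_series_R_ext (fun n => sum_f_R0 (fun k => p ^ k * p ^ (n - k)) n)%R _
           (/ (1 - p) * / (1 - p))%R);
    [|field; lra|exact (is_series_mult_pos _ _ _ _ Hg Hg Hpos Hpos)].
  intros n. rewrite (sum_eq _ (fun _ => p ^ n)%R).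
  - rewrite sum_cte. ring.
  - intros i Hi. rewrite <- pow_add. f_equal. lia.
Qed.

(** * The exponential series *)

Lemma Rinv_fact_S_le (n : nat) : (/ INR (fact (S n)) <= / INR (fact n))%R.
Proof.
  apply Rinv_le_contravar; [apply INR_fact_lt_0|]. apply le_INR, fact_le. lia.
Qed.

Lemma Cexp_series_term_Cmod (w : C) (n : nat) :
  Cmod (w ^ n / INR (fact n)) = (Cmod w ^ n / INR (fact n))%R.
Proof.
  rewrite Cmod_div by apply RtoC_fact_neq0.
  rewrite Cmod_pow, Cmod_RtoC_nonneg by apply pos_INR. reflexivity.
Qed.

Lemma Cexp_is_series (w : C) : is_series (fun n => w ^ n / INR (fact n)) (Cexp w).
Proof.
  apply (Csum_Cmod_le _ (fun n => Cmod w ^ n / INR (fact n))%R (exp (Cmod w))).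
  - intros n. rewrite Cexp_series_term_Cmod. lra.
  - apply is_series_exp.
Qed.

Lemma Cmod_Cexp_le (w : C) (r : R) : (Cmod w <= r)%R -> (Cmod (Cexp w) <= exp r)%R.
Proof.
  intros Hw.
  apply (Csum_Cmod_le _ (fun n => r ^ n / INR (fact n))%R (exp r)); [|apply is_series_exp].
  intros n. rewrite Cexp_series_term_Cmod.
  apply Rmult_le_compat_r; [left; apply Rinv_0_lt_compat, INR_fact_lt_0|].
  apply pow_incr. split; [apply Cmod_ge_0|exact Hw].
Qed.

Lemma Cmod_Cexp_sub1_le (w : C) (r : R) :
  (Cmod w <= r)%R -> (Cmod (Cexp w - 1) <= Cmod w * exp r)%R.
Proof.
  intros Hw.
  replace (Cexp w - 1) with (Cexp w - w ^ 0 / INR (fact 0)) by (simpl; field).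
  apply (is_series_Cmod_sub_head_le (fun n => w ^ n / INR (fact n))
           (fun n => Cmod w * (r ^ n / INR (fact n)))%R);
    [|apply Cexp_is_series|exact (is_series_scal (Cmod w) _ _ (is_series_exp r))].
  intros n. rewrite Cexp_series_term_Cmod. simpl pow.
  unfold Rdiv. rewrite Rmult_assoc.
  apply Rmult_le_compat_l; [apply Cmod_ge_0|].
  apply Rmult_le_compat; [apply pow_le, Cmod_ge_0|left; apply Rinv_0_lt_compat, INR_fact_lt_0| |].
  - apply pow_incr. split; [apply Cmod_ge_0|exact Hw].
  - apply Rinv_fact_S_le.
Qed.

Lemma Cexp_0 : Cexp 0 = 1.
Proof.
  apply Ceq_of_Cmod_sub_le0.
  pose proof (Cmod_Cexp_sub1_le 0 0 ltac:(rewrite Cmod_0; lra)) as H.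
  now rewrite Cmod_0, Rmult_0_l in H.
Qed.

Lemma Cpow_taylor2_le (z d : C) (r : R) (k : nat) :
  (Cmod z <= r)%R -> (Cmod (z + d) <= r)%R ->
  (Cmod ((z + d) ^ S (S k) - z ^ S (S k) - INR (S (S k)) * d * z ^ S k)
     <= INR (S (S k)) * INR (S k) / 2 * Cmod d ^ 2 * r ^ k)%R.
Proof.
  intros Hz Hzd. assert (Hr : (0 <= r)%R) by (pose proof (Cmod_ge_0 z); lra).
  induction k as [|k IH].
  - replace ((z + d) ^ 2 - z ^ 2 - INR 2 * d * z ^ 1) with (d * d)
      by (simpl; rewrite RtoC_plus; ring).
    rewrite Cmod_mult. simpl. lra.
  - set (E := (z + d) ^ S (S k) - z ^ S (S k) - INR (S (S k)) * d * z ^ S k) in IH.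
    replace ((z + d) ^ S (S (S k)) - z ^ S (S (S k)) - INR (S (S (S k))) * d * z ^ S (S k))
      with ((z + d) * E + INR (S (S k)) * (d * d) * z ^ S k)
      by (unfold E; rewrite (S_INR (S (S k))), RtoC_plus; simpl; ring).
    eapply Rle_trans; [apply Cmod_triangle|].
    rewrite !Cmod_mult, Cmod_pow, Cmod_RtoC_nonneg by apply pos_INR.
    assert (Hzk : (Cmod z ^ S k <= r ^ S k)%R) by (apply pow_incr; split; auto using Cmod_ge_0).
    assert (H1 : (Cmod (z + d) * Cmod E
                  <= r * (INR (S (S k)) * INR (S k) / 2 * Cmod d ^ 2 * r ^ k))%R)
      by (apply Rmult_le_compat; auto using Cmod_ge_0).
    assert (H2 : (INR (S (S k)) * (Cmod d * Cmod d) * Cmod z ^ S k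
                  <= INR (S (S k)) * (Cmod d * Cmod d) * r ^ S k)%R).
    { apply Rmult_le_compat_l; [|exact Hzk].
      apply Rmult_le_pos; [apply pos_INR|]. pose proof (Cmod_ge_0 d); nra. }
    eapply Rle_trans; [apply Rplus_le_compat; [exact H1|exact H2]|].
    rewrite !S_INR. simpl. nra.
Qed.

Lemma pseries_taylor2_le (c : nat -> C) (z d : C) (r : R) (f fd f' : C) (K : R) :
  (Cmod z <= r)%R -> (Cmod (z + d) <= r)%R ->
  is_series (fun n => c n * (z + d) ^ n) fd ->
  is_series (fun n => c n * z ^ n) f ->
  is_series (fun n => INR (S n) * c (S n) * z ^ n) f' ->
  is_series (fun n => INR (S (S n)) * INR (S n) / 2 * Cmod (c (S (S n))) * r ^ n)%R K ->
  (Cmod (fd - f - d * f') <= Cmod d ^ 2 * K)%R.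
Proof.
  intros Hz Hzd Hfd Hf Hf' HK.
  set (u := fun n => c (S n) * ((z + d) ^ S n - z ^ S n - INR (S n) * d * z ^ n)).
  assert (Hu : is_series u (fd - f - d * f')).
  { refine (is_series_C_ext _ _ _ _ _ _
              (is_series_Cminus _ _ _ _ (is_series_C_shift _ _ (is_series_Cminus _ _ _ _ Hfd Hf))
                                (is_series_Cscal d _ _ Hf'))).
    - intros n. unfold u. simpl. ring.
    - simpl. ring. }
  replace (fd - f - d * f') with (fd - f - d * f' - u 0%nat)
    by (unfold u; simpl; ring).
  apply (is_series_Cmod_sub_head_le u
           (fun n => Cmod d ^ 2 * (INR (S (S n)) * INR (S n) / 2 * Cmod (c (S (S n))) * r ^ n))%R);
    [|exact Hu|exact (is_series_scal _ _ _ HK)].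
  intros n. unfold u. rewrite Cmod_mult.
  eapply Rle_trans.
  - apply Rmult_le_compat_l; [apply Cmod_ge_0|]. exact (Cpow_taylor2_le z d r n Hz Hzd).
  - right. ring.
Qed.

Lemma Cexp_taylor2_le (w d : C) (r : R) :
  (Cmod w <= r)%R -> (Cmod (w + d) <= r)%R ->
  (Cmod (Cexp (w + d) - Cexp w - d * Cexp w) <= Cmod d ^ 2 * (exp r / 2))%R.
Proof.
  intros Hw Hwd.
  assert (Hser : forall v, is_series (fun n => / INR (fact n) * v ^ n) (Cexp v)).
  { intros v. apply (is_series_C_ext (fun n => v ^ n / INR (fact n)) _ (Cexp v));
      [intros n; apply Cmult_comm|reflexivity|apply Cexp_is_series]. }
  apply (pseries_taylor2_le (fun n => / INR (fact n)) w d r); auto.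
  - apply (is_series_C_ext (fun n => w ^ n / INR (fact n)) _ (Cexp w));
      [|reflexivity|apply Cexp_is_series].
    intros n. rewrite fact_simpl, mult_INR, RtoC_mult.
    field. split; [apply RtoC_fact_neq0|apply RtoC_INR_S_neq0].
  - apply (is_series_R_ext (fun n => / 2 * (r ^ n / INR (fact n)))%R _ (/ 2 * exp r)%R);
      [|field|exact (is_series_scal (/ 2)%R _ _ (is_series_exp r))].
    intros n. rewrite Cmod_inv by apply RtoC_fact_neq0.
    rewrite Cmod_RtoC_nonneg by apply pos_INR.
    rewrite !fact_simpl, !mult_INR.
    field. split; [apply INR_fact_neq_0|]. split; apply not_0_INR; lia.
Qed.

(** * Functions on [[0, 1]] with a quadratic Taylor remainder *)

(* This class is closed under products and [Cexp], and its
   members with [D = 0] are constant: this replaces complex differential calculus in the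
   proofs of [Cexp_add] and [Cexp_mlog1m]. *)
Definition quad_deriv (F D : R -> C) (M B : R) : Prop :=
  (forall t, (0 <= t <= 1)%R -> (Cmod (F t) <= B)%R /\ (Cmod (D t) <= B)%R) /\
  (forall t h, (0 <= t)%R -> (0 <= h)%R -> (t + h <= 1)%R ->
     (Cmod (F (t + h)%R - F t - h * D t) <= M * h ^ 2)%R).

Lemma quad_deriv_ge0 (F D : R -> C) (M B : R) :
  quad_deriv F D M B -> (0 <= M)%R /\ (0 <= B)%R.
Proof.
  intros [HB HM]. split.
  - specialize (HM 0%R 1%R ltac:(lra) ltac:(lra) ltac:(lra)).
    pose proof (Cmod_ge_0 (F (0 + 1)%R - F 0%R - RtoC 1 * D 0%R)). simpl in HM. lra.
  - destruct (HB 0%R ltac:(lra)) as [H _]. pose proof (Cmod_ge_0 (F 0%R)). lra.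
Qed.

Lemma quad_deriv_const_steps_le (F D : R -> C) (M B : R) (N k : nat) :
  quad_deriv F D M B -> (forall t, (0 <= t <= 1)%R -> D t = 0) -> (k <= S N)%nat ->
  (Cmod (F (INR k / INR (S N))%R - F 0%R) <= INR k * (M * (/ INR (S N)) ^ 2))%R.
Proof.
  intros [_ HQ] HD. set (h := (/ INR (S N))%R).
  assert (Hh : (0 < h)%R) by (apply Rinv_0_lt_compat, lt_0_INR; lia).
  induction k as [|k IH]; intros Hk.
  - unfold Rdiv. rewrite Rmult_0_l. replace (F 0%R - F 0%R) with (RtoC 0) by ring.
    rewrite Cmod_0. change (INR 0) with 0%R. lra.
  - assert (Hkh : (INR (S k) * h <= 1)%R).
    { unfold h. apply (Rmult_le_reg_r (INR (S N))); [apply lt_0_INR; lia|].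
      rewrite Rmult_assoc, Rinv_l, Rmult_1_r, Rmult_1_l by (apply not_0_INR; lia).
      now apply le_INR. }
    pose proof (pos_INR k). rewrite S_INR in Hkh |- *. unfold Rdiv. fold h.
    replace ((INR k + 1) * h)%R with (INR k * h + h)%R by ring.
    specialize (HQ (INR k * h)%R h ltac:(nra) ltac:(lra) ltac:(lra)).
    rewrite HD in HQ by (split; nra).
    replace (F (INR k * h + h)%R - F (INR k * h)%R - h * 0)
      with (F (INR k * h + h)%R - F (INR k * h)%R) in HQ by ring.
    replace (F (INR k * h + h)%R - F 0%R)
      with ((F (INR k * h + h)%R - F (INR k * h)%R) + (F (INR k * h)%R - F 0%R)) by ring.
    eapply Rle_trans; [apply Cmod_triangle|].
    specialize (IH ltac:(lia)). unfold Rdiv in IH. fold h in IH. lra.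
Qed.

Lemma quad_deriv_const (F D : R -> C) (M B : R) :
  quad_deriv F D M B -> (forall t, (0 <= t <= 1)%R -> D t = 0) -> F 1%R = F 0%R.
Proof.
  intros HQ HD. destruct (quad_deriv_ge0 _ _ _ _ HQ) as [HM _].
  apply Ceq_of_Cmod_sub_le0.
  (* [N] steps of length [1/N] from 0 to 1 cost at most [N * M/N^2] *)
  apply (Rle_0_of_le_lim0 _ (fun N => M / INR (S N))%R); [|apply is_lim_seq_div_succ].
  intros N. pose proof (quad_deriv_const_steps_le F D M B N (S N) HQ HD (le_n _)) as Hsteps.
  replace (INR (S N) / INR (S N))%R with 1%R in Hsteps by (field; apply not_0_INR; lia).
  eapply Rle_trans; [exact Hsteps|]. right. field. apply not_0_INR; lia.
Qed.

Lemma quad_deriv_affine (c a : C) :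
  quad_deriv (fun t => c + t * a) (fun _ => a) 0 (Cmod c + Cmod a).
Proof.
  split.
  - intros t Ht. pose proof (Cmod_ge_0 c). pose proof (Cmod_ge_0 a). split; [|lra].
    eapply Rle_trans; [apply Cmod_triangle|].
    rewrite Cmod_mult, Cmod_RtoC_nonneg by lra. nra.
  - intros t h _ _ _.
    replace (c + (t + h)%R * a - (c + t * a) - h * a) with (RtoC 0) by (rewrite RtoC_plus; ring).
    rewrite Cmod_0. lra.
Qed.

Lemma quad_deriv_mul (F D G E : R -> C) (M B M' B' : R) :
  quad_deriv F D M B -> quad_deriv G E M' B' ->
  quad_deriv (fun t => F t * G t) (fun t => F t * E t + D t * G t)
             (2 * B * M' + B * B' + M * B') (2 * B * B').
Proof.
  intros HF HG.
  destruct (quad_deriv_ge0 _ _ _ _ HF) as [HM HB], (quad_deriv_ge0 _ _ _ _ HG) as [HM' HB'].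
  destruct HF as [HF1 HF2], HG as [HG1 HG2]. split.
  - intros t Ht. destruct (HF1 t Ht) as [HFt HDt], (HG1 t Ht) as [HGt HEt]. split.
    + eapply Rle_trans; [exact (Cmod_mult_le _ _ _ _ HFt HGt)|nra].
    + eapply Rle_trans; [apply Cmod_triangle|].
      pose proof (Cmod_mult_le _ _ _ _ HFt HEt). pose proof (Cmod_mult_le _ _ _ _ HDt HGt). lra.
  - intros t h Ht Hh Hth.
    destruct (HF1 t ltac:(lra)) as [HFt HDt], (HG1 t ltac:(lra)) as [_ HEt].
    destruct (HG1 (t + h)%R ltac:(lra)) as [HGth _].
    specialize (HF2 t h Ht Hh Hth). specialize (HG2 t h Ht Hh Hth).
    set (eF := F (t + h)%R - F t - h * D t) in HF2.
    set (eG := G (t + h)%R - G t - h * E t) in HG2.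
    replace (F (t + h)%R * G (t + h)%R - F t * G t - h * (F t * E t + D t * G t))
      with (F t * eG + (h * h) * (D t * E t) + h * (D t * eG) + eF * G (t + h)%R)
      by (unfold eF, eG; ring).
    assert (Hh1 : (Cmod (RtoC h) <= 1)%R) by (rewrite Cmod_RtoC_nonneg; lra).
    assert (Hh2 : (Cmod (RtoC h * RtoC h) <= h ^ 2)%R)
      by (rewrite Cmod_mult, Cmod_RtoC_nonneg by lra; lra).
    pose proof (Cmod_mult_le _ _ _ _ HFt HG2).
    pose proof (Cmod_mult_le _ _ _ _ Hh2 (Cmod_mult_le _ _ _ _ HDt HEt)).
    pose proof (Cmod_mult_le _ _ _ _ Hh1 (Cmod_mult_le _ _ _ _ HDt HG2)).
    pose proof (Cmod_mult_le _ _ _ _ HF2 HGth).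
    pose proof (Cmod_triangle (F t * eG + h * h * (D t * E t) + h * (D t * eG)) (eF * G (t + h)%R)).
    pose proof (Cmod_triangle (F t * eG + h * h * (D t * E t)) (h * (D t * eG))).
    pose proof (Cmod_triangle (F t * eG) (h * h * (D t * E t))).
    assert (0 <= h ^ 2)%R by nra.
    nra.
Qed.

Lemma quad_deriv_Cexp (G D : R -> C) (M B : R) :
  quad_deriv G D M B ->
  quad_deriv (fun t => Cexp (G t)) (fun t => D t * Cexp (G t))
             (M * exp B + (B + M) ^ 2 * (exp B / 2)) ((B + 1) * exp B).
Proof.
  intros HG. destruct (quad_deriv_ge0 _ _ _ _ HG) as [HM HB]. destruct HG as [HG1 HG2].
  pose proof (exp_pos B). split.
  - intros t Ht. destruct (HG1 t Ht) as [HGt HDt].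
    pose proof (Cmod_Cexp_le _ _ HGt) as HeGt. split; [nra|].
    eapply Rle_trans; [exact (Cmod_mult_le _ _ _ _ HDt HeGt)|nra].
  - intros t h Ht Hh Hth.
    destruct (HG1 t ltac:(lra)) as [HGt HDt], (HG1 (t + h)%R ltac:(lra)) as [HGth _].
    specialize (HG2 t h Ht Hh Hth).
    set (dG := G (t + h)%R - G t).
    replace (G (t + h)%R) with (G t + dG) in HGth |- * by (unfold dG; ring).
    replace (Cexp (G t + dG) - Cexp (G t) - h * (D t * Cexp (G t)))
      with ((Cexp (G t + dG) - Cexp (G t) - dG * Cexp (G t))
            + (G (t + h)%R - G t - h * D t) * Cexp (G t)) by (unfold dG; ring).
    eapply Rle_trans; [apply Cmod_triangle|].
    pose proof (Cexp_taylor2_le _ _ _ HGt HGth) as Htaylor.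
    pose proof (Cmod_mult_le _ _ _ _ HG2 (Cmod_Cexp_le _ _ HGt)) as Hrem.
    assert (HdG : (Cmod dG <= h * (B + M))%R).
    { replace dG with (h * D t + (G (t + h)%R - G t - h * D t)) by (unfold dG; ring).
      eapply Rle_trans; [apply Cmod_triangle|].
      rewrite Cmod_mult, Cmod_RtoC_nonneg by lra.
      assert (h * Cmod (D t) <= h * B)%R by (apply Rmult_le_compat_l; lra).
      assert (M * h ^ 2 <= M * h)%R by (apply Rmult_le_compat_l; [lra|simpl; nra]).
      lra. }
    assert (HdG2 : (Cmod dG ^ 2 <= h ^ 2 * (B + M) ^ 2)%R).
    { rewrite <- Rpow_mult_distr. apply pow_incr. split; [apply Cmod_ge_0|exact HdG]. }
    assert (Cmod dG ^ 2 * (exp B / 2) <= h ^ 2 * (B + M) ^ 2 * (exp B / 2))%R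
      by (apply Rmult_le_compat_r; lra).
    nra.
Qed.

Lemma Cexp_add (a b : C) : Cexp (a + b) = Cexp a * Cexp b.
Proof.
  (* [t |-> Cexp (t a) Cexp (a + b - t a)] has derivative 0 on [0, 1] *)
  pose proof (quad_deriv_mul _ _ _ _ _ _ _ _
                (quad_deriv_Cexp _ _ _ _ (quad_deriv_affine 0 a))
                (quad_deriv_Cexp _ _ _ _ (quad_deriv_affine (a + b) (- a)))) as H.
  apply quad_deriv_const in H; [|intros t _; ring].
  replace (0 + RtoC 1 * a) with a in H by ring.
  replace (a + b + RtoC 1 * - a) with b in H by ring.
  replace (0 + RtoC 0 * a) with (RtoC 0) in H by ring.
  replace (a + b + RtoC 0 * - a) with (a + b) in H by ring.
  rewrite Cexp_0, Cmult_1_l in H. now rewrite H.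
Qed.

Lemma Cexp_mul_Cexp_opp (w : C) : Cexp w * Cexp (- w) = 1.
Proof. rewrite <- Cexp_add, <- Cexp_0. f_equal. ring. Qed.

(** * The logarithmic series *)

(* [-log (1 - y)]; the [k = 0] term is [1 / 0 = 0]. *)
Definition mlog1m (y : C) : C := Csum (fun k => y ^ k / INR k).

Lemma mlog1m_term_Cmod_le (y : C) (k : nat) : (Cmod (y ^ k / INR k) <= Cmod y ^ k)%R.
Proof.
  destruct k as [|k].
  - simpl. unfold Cdiv. rewrite Cinv_R0, Cmult_0_r, Cmod_0. lra.
  - rewrite Cmod_div, Cmod_pow, Cmod_RtoC_nonneg by (apply pos_INR || apply RtoC_INR_S_neq0).
    pose proof (pow_le _ (S k) (Cmod_ge_0 y)).
    assert (1 <= INR (S k))%R by (apply (le_INR 1); lia).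
    unfold Rdiv. rewrite <- (Rmult_1_r (Cmod y ^ S k)) at 2.
    apply Rmult_le_compat_l; [lra|]. rewrite <- Rinv_1. apply Rinv_le_contravar; lra.
Qed.

Lemma mlog1m_spec (y : C) :
  (Cmod y < 1)%R ->
  is_series (fun k => y ^ k / INR k) (mlog1m y) /\ (Cmod (mlog1m y) <= / (1 - Cmod y))%R.
Proof.
  intros Hy. apply (Csum_Cmod_le _ (fun k => Cmod y ^ k)%R); [apply mlog1m_term_Cmod_le|].
  apply is_series_geom. rewrite Rabs_pos_eq; [lra|apply Cmod_ge_0].
Qed.

Lemma mlog1m_0 : mlog1m 0 = 0.
Proof.
  apply Csum_correct, (is_series_C_ext (fun _ => RtoC 0) _ (RtoC 0));
    [|reflexivity|exact is_series_C0].
  intros [|k]; simpl; unfold Cdiv; [rewrite Cinv_R0|]; ring.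
Qed.

Lemma mlog1m_taylor2_le (z d : C) (r : R) :
  (r < 1)%R -> (Cmod z <= r)%R -> (Cmod (z + d) <= r)%R ->
  (Cmod (mlog1m (z + d) - mlog1m z - d / (1 - z)) <= Cmod d ^ 2 * (/ (1 - r) ^ 2 / 2))%R.
Proof.
  intros Hr Hz Hzd.
  assert (Hser : forall v, (Cmod v <= r)%R -> is_series (fun n => / INR n * v ^ n) (mlog1m v)).
  { intros v Hv. apply (is_series_C_ext (fun n => v ^ n / INR n) _ (mlog1m v));
      [intros n; apply Cmult_comm|reflexivity|apply mlog1m_spec; lra]. }
  apply (pseries_taylor2_le (fun n => / INR n) z d r); auto.
  - apply (is_series_C_ext (fun n => z ^ n) _ (/ (1 - z)));
      [|reflexivity|apply is_series_Cgeom; lra].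
    intros n. field. apply RtoC_INR_S_neq0.
  - pose proof (Cmod_ge_0 z).
    apply (is_series_R_ext (fun n => / 2 * (INR (S n) * r ^ n)) _ (/ 2 * / (1 - r) ^ 2))%R;
      [|field; lra|exact (is_series_scal (/ 2)%R _ _ (is_series_succ_mul_pow r ltac:(lra)))].
    intros n. rewrite Cmod_inv, Cmod_RtoC_nonneg by (apply pos_INR || apply RtoC_INR_S_neq0).
    field. apply not_0_INR. lia.
Qed.

Lemma quad_deriv_mlog1m (y : C) :
  (Cmod y < 1)%R ->
  quad_deriv (fun t => mlog1m (t * y)) (fun t => y / (1 - t * y))
             (/ (1 - Cmod y) ^ 2 / 2) (/ (1 - Cmod y)).
Proof.
  intros Hy. pose proof (Cmod_ge_0 y).
  assert (Hden : forall t, (0 <= t <= 1)%R -> (1 - Cmod y <= Cmod (1 - t * y))%R).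
  { intros t Ht. pose proof (Cmod_1_sub_ge (t * y)). pose proof (Cmod_scale_le t y Ht). lra. }
  split.
  - intros t Ht. pose proof (Cmod_scale_le t y Ht). split.
    + eapply Rle_trans; [apply mlog1m_spec; lra|]. apply Rinv_le_contravar; lra.
    + specialize (Hden t Ht). rewrite Cmod_div by (apply one_sub_neq0_of_Cmod_lt1; lra).
      unfold Rdiv. rewrite <- (Rmult_1_l (/ (1 - Cmod y))).
      apply Rmult_le_compat; [lra|left; apply Rinv_0_lt_compat; lra|lra|].
      apply Rinv_le_contravar; lra.
  - intros t h Ht Hh Hth.
    replace ((t + h)%R * y) with (t * y + h * y) by (rewrite RtoC_plus; ring).
    replace (h * (y / (1 - t * y))) with (h * y / (1 - t * y)) by (unfold Cdiv; ring).
    eapply Rle_trans.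
    + apply mlog1m_taylor2_le; [exact Hy|apply Cmod_scale_le; lra|].
      replace (t * y + h * y) with ((t + h)%R * y) by (rewrite RtoC_plus; ring).
      apply Cmod_scale_le; lra.
    + rewrite Rmult_comm. apply Rmult_le_compat_l.
      * apply Rmult_le_pos; [|lra]. left. apply Rinv_0_lt_compat, pow_lt. lra.
      * apply pow_incr. split; [apply Cmod_ge_0|].
        rewrite Cmod_mult, Cmod_RtoC_nonneg by lra. nra.
Qed.

Lemma Cexp_mlog1m (y : C) : (Cmod y < 1)%R -> (1 - y) * Cexp (mlog1m y) = 1.
Proof.
  intros Hy.
  (* [t |-> (1 - t y) Cexp (mlog1m (t y))] has derivative 0 on [0, 1] *)
  pose proof (quad_deriv_mul _ _ _ _ _ _ _ _ (quad_deriv_affine 1 (- y))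
                (quad_deriv_Cexp _ _ _ _ (quad_deriv_mlog1m y Hy))) as H.
  apply quad_deriv_const in H.
  - replace (RtoC 1 * y) with y in H by ring. replace (RtoC 0 * y) with (RtoC 0) in H by ring.
    rewrite mlog1m_0, Cexp_0 in H. replace (1 - y) with (1 + RtoC 1 * - y) by ring.
    rewrite H. ring.
  - intros t Ht. field. apply one_sub_neq0_of_Cmod_lt1.
    pose proof (Cmod_scale_le t y Ht). lra.
Qed.

(** * The q-series *)

Section QSeries.

Variable q : C.
Hypothesis hq : (1 < Cmod q)%R.

Lemma q_neq0 : q <> 0.
Proof. intros H. rewrite H, Cmod_0 in hq. lra. Qed.

Lemma Cmod_1_sub_qpow_ge (k : nat) : (Cmod q ^ k - 1 <= Cmod (1 - q ^ k))%R.
Proof. rewrite Cmod_sub_sym, <- Cmod_pow, <- Cmod_1 at 1. apply Cmod_sub_ge. Qed.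

Lemma Cmod_qpoch_ge (n : nat) : (INR (fact n) * (Cmod q - 1) ^ n <= Cmod (qpoch q n))%R.
Proof.
  induction n as [|n IH].
  - simpl. rewrite Cmod_1. lra.
  - simpl qpoch. rewrite Cmod_mult, fact_simpl, mult_INR.
    (* Bernoulli: [|1 - q^(n+1)| >= |q|^(n+1) - 1 >= (n+1) (|q| - 1)] *)
    assert (Hbern : (INR (S n) * (Cmod q - 1) <= Cmod (1 - q ^ S n))%R).
    { pose proof (Rle_pow_lin (Cmod q - 1) (S n) ltac:(lra)) as H.
      replace (1 + (Cmod q - 1))%R with (Cmod q) in H by ring.
      pose proof (Cmod_1_sub_qpow_ge (S n)). lra. }
    pose proof (INR_fact_lt_0 n). pose proof (pow_le (Cmod q - 1) n ltac:(lra)).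
    replace (INR (S n) * INR (fact n) * (Cmod q - 1) ^ S n)%R
      with (INR (fact n) * (Cmod q - 1) ^ n * (INR (S n) * (Cmod q - 1)))%R by (simpl; ring).
    apply Rmult_le_compat; [nra|apply Rmult_le_pos; [apply pos_INR|lra]|exact IH|exact Hbern].
Qed.

Lemma qpoch_neq0 (n : nat) : qpoch q n <> 0.
Proof.
  intros H. pose proof (Cmod_qpoch_ge n) as Hge. rewrite H, Cmod_0 in Hge.
  pose proof (INR_fact_lt_0 n). pose proof (pow_lt (Cmod q - 1) n ltac:(lra)). nra.
Qed.

Let alpha := (/ (Cmod q - 1))%R.

Lemma alpha_pos : (0 < alpha)%R.
Proof. apply Rinv_0_lt_compat. lra. Qed.

Lemma f1_term_Cmod_le (y : C) (n : nat) :
  (Cmod (y ^ n / qpoch q n) <= (alpha * Cmod y) ^ n / INR (fact n))%R.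
Proof.
  rewrite Cmod_div by apply qpoch_neq0. rewrite Cmod_pow, Rpow_mult_distr.
  pose proof (INR_fact_lt_0 n). pose proof (pow_lt (Cmod q - 1) n ltac:(lra)).
  replace ((alpha ^ n * Cmod y ^ n) / INR (fact n))%R
    with (Cmod y ^ n / (INR (fact n) * (Cmod q - 1) ^ n))%R
    by (unfold alpha; rewrite pow_inv; field; lra).
  unfold Rdiv. apply Rmult_le_compat_l; [apply pow_le, Cmod_ge_0|].
  apply Rinv_le_contravar; [nra|apply Cmod_qpoch_ge].
Qed.

Lemma f1_is_series (y : C) : is_series (fun n => y ^ n / qpoch q n) (f1 q y).
Proof.
  apply (Csum_Cmod_le _ _ (exp (alpha * Cmod y)) (f1_term_Cmod_le y)), is_series_exp.
Qed.

Lemma Cmod_f1_sub1_le (y : C) :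
  (Cmod y <= 1)%R -> (Cmod (f1 q y - 1) <= Cmod y * alpha * exp alpha)%R.
Proof.
  intros Hy. pose proof alpha_pos. pose proof (Cmod_ge_0 y).
  replace (f1 q y - 1) with (f1 q y - y ^ 0 / qpoch q 0) by (simpl; field).
  apply (is_series_Cmod_sub_head_le (fun n => y ^ n / qpoch q n)
           (fun n => Cmod y * alpha * (alpha ^ n / INR (fact n)))%R);
    [|apply f1_is_series|exact (is_series_scal (Cmod y * alpha)%R _ _ (is_series_exp alpha))].
  intros n. eapply Rle_trans; [apply f1_term_Cmod_le|].
  assert (Hyn : (Cmod y ^ n <= 1)%R) by (apply pow_le_1; lra).
  pose proof (pow_le alpha n ltac:(lra)). pose proof (pow_le _ n (Cmod_ge_0 y)).
  pose proof (Rinv_fact_S_le n). pose proof (Rinv_0_lt_compat _ (INR_fact_lt_0 (S n))).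
  replace ((alpha * Cmod y) ^ S n / INR (fact (S n)))%R
    with (Cmod y * alpha * alpha ^ n * (Cmod y ^ n * / INR (fact (S n))))%R
    by (simpl; rewrite Rpow_mult_distr; unfold Rdiv; ring).
  apply Rle_trans with (Cmod y * alpha * alpha ^ n * (1 * / INR (fact n)))%R;
    [|right; unfold Rdiv; ring].
  apply Rmult_le_compat_l; [apply Rmult_le_pos; [apply Rmult_le_pos|]; lra|].
  apply Rmult_le_compat; lra.
Qed.

Lemma one_sub_qpow_neq0 (k : nat) : 1 - q ^ S k <> 0.
Proof.
  intros H. pose proof (Cmod_1_sub_qpow_ge (S k)) as Hge. rewrite H, Cmod_0 in Hge.
  pose proof (Rle_pow (Cmod q) 1 (S k) ltac:(lra) ltac:(lia)). simpl in *. lra.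
Qed.

Lemma f1_fe (x : C) : f1 q x = (1 - x / q) * f1 q (x / q).
Proof.
  set (y := x / q). pose proof q_neq0.
  assert (Hx : x = q * y) by (unfold y; field; exact q_neq0).
  (* coefficientwise, [y^(n+1) - x^(n+1)] / (q;q)_(n+1) = y * y^n / (q;q)_n *)
  assert (Hshift : is_series (fun n => y * (y ^ n / qpoch q n)) (f1 q y - f1 q x)).
  { refine (is_series_C_ext _ _ _ _ _ _
              (is_series_C_shift _ _ (is_series_Cminus _ _ _ _ (f1_is_series y) (f1_is_series x)))).
    - intros n. rewrite Hx, Cpow_mult_l. simpl qpoch.
      pose proof (qpoch_neq0 n). pose proof (one_sub_qpow_neq0 n).
      simpl. field. auto.
    - simpl. field. }
  pose proof (is_series_C_unique _ _ _ Hshift (is_series_Cscal y _ _ (f1_is_series y))) as E.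
  replace (f1 q x) with (f1 q y - (f1 q y - f1 q x)) by ring. rewrite E. ring.
Qed.

(* The [k = 0] term is [1 / 0 = 0]. *)
Definition qlog_term (k : nat) (x : C) : C := x ^ k / (INR k * (q ^ k - 1)).

Definition qlog (x : C) : C := Csum (fun k => qlog_term k x).

Let rho := (/ Cmod q)%R.

Lemma rho_bounds : (0 < rho < 1)%R.
Proof.
  unfold rho. split; [apply Rinv_0_lt_compat; lra|].
  rewrite <- Rinv_1. apply Rinv_lt_contravar; lra.
Qed.

Lemma Cmod_div_q (x : C) : Cmod (x / q) = (rho * Cmod x)%R.
Proof. rewrite Cmod_div by exact q_neq0. unfold rho, Rdiv. ring. Qed.

Lemma Cmod_div_q_lt1 (x : C) : (Cmod x < Cmod q)%R -> (Cmod (x / q) < 1)%R.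
Proof.
  intros Hx. rewrite Cmod_div_q. apply (Rmult_lt_reg_l (Cmod q)); [lra|].
  unfold rho. field_simplify; lra.
Qed.

Lemma qlog_term_0 (x : C) : qlog_term 0 x = 0.
Proof.
  unfold qlog_term. simpl. replace (RtoC 0 * (1 - 1)) with (RtoC 0) by ring.
  unfold Cdiv. rewrite Cinv_R0. ring.
Qed.

Lemma qlog_term_Cmod_le (k : nat) (x : C) :
  (Cmod (qlog_term k x) <= / (1 - rho) * (rho * Cmod x) ^ k)%R.
Proof.
  pose proof rho_bounds. pose proof (pow_le _ k (Cmod_ge_0 x)).
  destruct k as [|j].
  - rewrite qlog_term_0, Cmod_0. simpl. rewrite Rmult_1_r. left. apply Rinv_0_lt_compat. lra.
  - (* [|S j| * |q^(j+1) - 1| >= |q|^(j+1) - 1 >= |q|^(j+1) (1 - rho)] *)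
    set (k := S j). pose proof (Rle_pow (Cmod q) 0 j ltac:(lra) ltac:(lia)) as Hqj.
    assert (Hqk : (Cmod q ^ k * (1 - rho) <= INR k * Cmod (q ^ k - 1))%R).
    { assert (Hk : (1 <= INR k)%R) by (apply (le_INR 1); unfold k; lia).
      pose proof (Cmod_1_sub_qpow_ge k) as Hge. rewrite Cmod_sub_sym in Hge.
      replace (Cmod q ^ k * (1 - rho))%R with (Cmod q ^ k - Cmod q ^ j)%R
        by (unfold k, rho; simpl; field; lra).
      simpl in Hqj. pose proof (Cmod_ge_0 (q ^ k - 1)). nra. }
    assert (Hpos : (0 < Cmod q ^ k * (1 - rho))%R)
      by (apply Rmult_lt_0_compat; [apply pow_lt|]; lra).
    unfold qlog_term. rewrite Cmod_div.
    2:{ intros Hz. apply (f_equal Cmod) in Hz.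
        rewrite Cmod_mult, Cmod_RtoC_nonneg, Cmod_0 in Hz by apply pos_INR. lra. }
    rewrite Cmod_mult, Cmod_pow, Cmod_RtoC_nonneg by apply pos_INR.
    replace (/ (1 - rho) * (rho * Cmod x) ^ k)%R with (Cmod x ^ k / (Cmod q ^ k * (1 - rho)))%R
      by (rewrite Rpow_mult_distr; unfold rho; rewrite pow_inv;
          field; repeat split; [apply pow_nonzero| |]; lra).
    unfold Rdiv. apply Rmult_le_compat_l; [easy|]. apply Rinv_le_contravar; assumption.
Qed.

Lemma qlog_is_series (x : C) :
  (Cmod x < Cmod q)%R -> is_series (fun k => qlog_term k x) (qlog x).
Proof.
  intros Hx. pose proof (Cmod_div_q_lt1 x Hx) as Hrx. rewrite Cmod_div_q in Hrx.
  assert (Hgeom : (Rabs (rho * Cmod x) < 1)%R)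
    by (rewrite Rabs_pos_eq; [lra|rewrite <- Cmod_div_q; apply Cmod_ge_0]).
  apply (Csum_Cmod_le _ _ (/ (1 - rho) * / (1 - rho * Cmod x))%R
           (fun k => qlog_term_Cmod_le k x)).
  exact (is_series_scal (/ (1 - rho))%R _ _ (is_series_geom (rho * Cmod x) Hgeom)).
Qed.

Definition qlog_const : R := (rho / (1 - rho) ^ 2)%R.

Lemma qlog_const_pos : (0 < qlog_const)%R.
Proof. pose proof rho_bounds. unfold qlog_const. apply Rdiv_lt_0_compat; [|apply pow_lt]; lra. Qed.

Lemma qlog_tail_le (m : nat) (x : C) :
  (Cmod x <= 1)%R ->
  (Cmod (qlog x - sum_n (fun k => qlog_term k x) m) <= qlog_const * Cmod x ^ S m)%R.
Proof.
  intros Hx. pose proof rho_bounds. pose proof (Cmod_ge_0 x).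
  assert (Hrx : (0 <= rho * Cmod x <= rho)%R) by (split; nra).
  eapply Rle_trans.
  - apply (is_series_Cmod_tail_le _ _ _ (rho * Cmod x) m ltac:(lra)
             (fun k => qlog_term_Cmod_le k x)).
    apply qlog_is_series. lra.
  - rewrite Rpow_mult_distr. pose proof (pow_le _ (S m) (Cmod_ge_0 x)).
    assert (Hrm : (rho ^ S m <= rho)%R).
    { change (rho ^ S m)%R with (rho * rho ^ m)%R. apply Rle_trans with (rho * 1)%R; [|lra].
      apply Rmult_le_compat_l; [lra|]. apply pow_le_1; lra. }
    assert (Hinv : (/ (1 - rho * Cmod x) <= / (1 - rho))%R) by (apply Rinv_le_contravar; lra).
    pose proof (Rinv_0_lt_compat (1 - rho) ltac:(lra)).
    apply Rle_trans with (/ (1 - rho) * (rho * Cmod x ^ S m) * / (1 - rho))%R.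
    + unfold Rdiv. apply Rmult_le_compat; [|left; apply Rinv_0_lt_compat; lra| |exact Hinv].
      * apply Rmult_le_pos; [lra|]. apply Rmult_le_pos; [apply pow_le|]; lra.
      * apply Rmult_le_compat_l; [lra|]. apply Rmult_le_compat_r; lra.
    + right. unfold qlog_const. field. lra.
Qed.

Lemma Cmod_qlog_le (x : C) : (Cmod x <= 1)%R -> (Cmod (qlog x) <= qlog_const * Cmod x)%R.
Proof.
  intros Hx. pose proof (qlog_tail_le 0 x Hx) as H.
  rewrite sum_O, qlog_term_0, pow_1 in H. now replace (qlog x) with (qlog x - 0) by ring.
Qed.

Lemma qlog_fe (x : C) :
  (Cmod x < Cmod q)%R -> qlog x = qlog (x / q) + mlog1m (x / q).
Proof.
  intros Hx. pose proof rho_bounds. pose proof q_neq0.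
  pose proof (Cmod_div_q_lt1 x Hx) as Hxq.
  assert (Hdiff : is_series (fun k => (x / q) ^ k / INR k) (qlog x - qlog (x / q))).
  { refine (is_series_C_ext _ _ _ _ _ eq_refl
              (is_series_Cminus _ _ _ _ (qlog_is_series x Hx) (qlog_is_series (x / q) ltac:(lra)))).
    intros [|k].
    - rewrite !qlog_term_0. simpl. unfold Cdiv. rewrite Cinv_R0. ring.
    - unfold qlog_term. unfold Cdiv. rewrite Cpow_mult_l, Cpow_inv by exact q_neq0.
      pose proof (Cpow_nz q (S k) q_neq0). pose proof (RtoC_INR_S_neq0 k).
      assert (q ^ S k - 1 <> 0) by (intros Hz; apply (one_sub_qpow_neq0 k), Cmod_eq_0;
                                    rewrite Cmod_sub_sym, Hz; apply Cmod_0).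
      field. auto. }
  rewrite <- (is_series_C_unique _ _ _ Hdiff (proj1 (mlog1m_spec _ Hxq))). ring.
Qed.

Definition f1_exp_qlog (x : C) : C := f1 q x * Cexp (qlog x).

Lemma f1_exp_qlog_fe (x : C) :
  (Cmod x < Cmod q)%R -> f1_exp_qlog x = f1_exp_qlog (x / q).
Proof.
  intros Hx. unfold f1_exp_qlog.
  pose proof (Cmod_div_q_lt1 x Hx) as Hxq.
  rewrite f1_fe, (qlog_fe x Hx), Cexp_add.
  transitivity (f1 q (x / q) * Cexp (qlog (x / q)) * ((1 - x / q) * Cexp (mlog1m (x / q))));
    [ring|].
  rewrite Cexp_mlog1m by exact Hxq. ring.
Qed.

Lemma f1_exp_qlog_lipschitz0 :
  exists L, (0 <= L)%R /\
    forall y, (Cmod y <= 1)%R -> (Cmod (f1_exp_qlog y - 1) <= L * Cmod y)%R.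
Proof.
  pose proof alpha_pos. pose proof qlog_const_pos.
  pose proof (exp_pos alpha). pose proof (exp_pos qlog_const).
  exists ((alpha * exp alpha + qlog_const) * exp qlog_const)%R. split.
  { apply Rmult_le_pos; [apply Rplus_le_le_0_compat; [apply Rmult_le_pos|]|]; lra. }
  intros y Hy. unfold f1_exp_qlog. pose proof (Cmod_ge_0 y).
  pose proof (Cmod_qlog_le y Hy) as Hq.
  assert (HqK : (Cmod (qlog y) <= qlog_const)%R) by nra.
  replace (f1 q y * Cexp (qlog y) - 1) with ((f1 q y - 1) * Cexp (qlog y) + (Cexp (qlog y) - 1))
    by ring.
  eapply Rle_trans; [apply Cmod_triangle|].
  pose proof (Cmod_mult_le _ _ _ _ (Cmod_f1_sub1_le y Hy) (Cmod_Cexp_le _ _ HqK)).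
  pose proof (Cmod_Cexp_sub1_le _ _ HqK).
  assert (Cmod (qlog y) * exp qlog_const <= qlog_const * Cmod y * exp qlog_const)%R
    by (apply Rmult_le_compat_r; [lra|exact Hq]).
  nra.
Qed.

Lemma f1_exp_qlog_eq1 (x : C) : (Cmod x <= 1)%R -> f1_exp_qlog x = 1.
Proof.
  intros Hx. pose proof rho_bounds. pose proof (Cmod_ge_0 x).
  destruct f1_exp_qlog_lipschitz0 as [L [HL Hlip]].
  assert (Hiter : forall n, f1_exp_qlog (x / q ^ n) = f1_exp_qlog x
                            /\ Cmod (x / q ^ n) = (rho ^ n * Cmod x)%R).
  { induction n as [|n [IH1 IH2]].
    - simpl. replace (x / 1) with x by field. split; [reflexivity|ring].
    - replace (x / q ^ S n) with (x / q ^ n / q)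
        by (simpl; field; split; [apply Cpow_nz|]; exact q_neq0).
      rewrite Cmod_div_q, IH2. split; [|simpl; ring].
      rewrite <- f1_exp_qlog_fe; [exact IH1|]. rewrite IH2.
      pose proof (pow_le_1 rho n ltac:(lra)). pose proof (pow_le rho n ltac:(lra)). nra. }
  apply Ceq_of_Cmod_sub_le0.
  apply (Rle_0_of_le_lim0 _ (fun n => L * rho ^ n))%R;
    [|apply is_lim_seq_scal_geom; rewrite Rabs_pos_eq; lra].
  intros n. destruct (Hiter n) as [<- Hmod].
  pose proof (pow_le_1 rho n ltac:(lra)). pose proof (pow_le rho n ltac:(lra)).
  eapply Rle_trans; [apply Hlip; rewrite Hmod; nra|].
  rewrite Hmod. apply Rmult_le_compat_l; [lra|]. nra.
Qed.

Lemma Etilde_S_eq (m : nat) (x : C) :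
  (Cmod x <= 1)%R ->
  Etilde q (S m) x = Cexp (- (qlog x - sum_n (fun k => qlog_term k x) (S m))).
Proof.
  intros Hx. set (s := sum_n (fun k => qlog_term k x) (S m)).
  assert (Hs : sum_n_m (fun k => qlog_term k x) 1 (S m) = s).
  { unfold s, sum_n. rewrite (sum_Sn_m _ 0) by lia. rewrite qlog_term_0.
    exact (eq_sym (Cplus_0_l _)). }
  change (Etilde q (S m) x) with (f1 q x * Cexp (sum_n_m (fun k => qlog_term k x) 1 (S m))).
  rewrite Hs.
  transitivity (f1 q x * Cexp (s + (qlog x - s)) * Cexp (- (qlog x - s))).
  - rewrite Cexp_add.
    transitivity (f1 q x * Cexp s * (Cexp (qlog x - s) * Cexp (- (qlog x - s)))); [|ring].
    rewrite Cexp_mul_Cexp_opp. ring.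
  - replace (s + (qlog x - s)) with (qlog x) by ring.
    change (f1 q x * Cexp (qlog x)) with (f1_exp_qlog x).
    rewrite f1_exp_qlog_eq1 by exact Hx. ring.
Qed.

Lemma Cmod_1_sub_Etilde_le (m : nat) (x : C) :
  (Cmod x <= 1)%R ->
  (Cmod (1 - Etilde q m x) <= qlog_const * exp qlog_const * Cmod x ^ (m + 1))%R.
Proof.
  intros Hx. pose proof qlog_const_pos. pose proof (exp_pos qlog_const).
  pose proof (Cmod_ge_0 x).
  pose proof (pow_le _ (m + 1) (Cmod_ge_0 x)).
  destruct m as [|m].
  - simpl Etilde. replace (RtoC 1 - RtoC 1) with (RtoC 0) by ring. rewrite Cmod_0.
    apply Rmult_le_pos; [nra|lra].
  - rewrite Etilde_S_eq, Cmod_sub_sym by exact Hx.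
    set (T := qlog x - sum_n (fun k => qlog_term k x) (S m)).
    assert (HT : (Cmod (- T) <= qlog_const * Cmod x ^ (S m + 1))%R).
    { rewrite Cmod_opp, Nat.add_1_r. exact (qlog_tail_le (S m) x Hx). }
    assert (HTK : (Cmod (- T) <= qlog_const)%R).
    { eapply Rle_trans; [exact HT|]. rewrite <- (Rmult_1_r qlog_const) at 2.
      apply Rmult_le_compat_l; [lra|]. apply pow_le_1; lra. }
    eapply Rle_trans; [exact (Cmod_Cexp_sub1_le _ _ HTK)|].
    rewrite (Rmult_comm qlog_const (exp qlog_const)), Rmult_assoc, (Rmult_comm (exp qlog_const)).
    apply Rmult_le_compat_r; lra.
Qed.

End QSeries.

Theorem lemma2p7 (q : C) (hq : (1 < Cmod q)%R) :
  exists C1 C2 : R, (0 < C1)%R /\ (0 < C2)%R /\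
    forall (m : nat) (x : C), (Cmod x <= 1)%R ->
      (Cmod (RtoC 1 - Etilde q m x) <= C1 * (C2 * Cmod x) ^ (m + 1))%R.
Proof.
  exists (qlog_const q * exp (qlog_const q))%R, 1%R.
  pose proof (qlog_const_pos q hq). pose proof (exp_pos (qlog_const q)).
  repeat split; [nra|lra|].
  intros m x Hx. rewrite Rmult_1_l. exact (Cmod_1_sub_Etilde_le q hq m x Hx).
Qed.
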